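(* Let $X$ be a Banach space (real or complex) and let $x\in X$ be non-zero. If $x$ is a right symmetric point of $X$ and $x$ is smooth, then $x$ is a left symmetric point of $X$.
   Context: In a normed space $X$ over $\mathbb{K}$, $x\perp_{BJ}y$ means $\|x+\lambda y\|\ge\|x\|$ for all $\lambda\in\mathbb{K}$; $x$ is a left symmetric point if $x\perp_{BJ}y$ implies $y\perp_{BJ}x$ for all $y\in X$, and a right symmetric point if $y\perp_{BJ}x$ implies $x\perp_{BJ}y$ for all $y\in X$. A non-zero $x$ is smooth if there is a unique norm-one $F\in X^*$ with $F(x)=\|x\|$. *)

From HB Require Import structures.
From mathcomp Require Import all_boot all_order all_algebra.
From mathcomp Require Import all_classical all_reals all_analysis.
From mathcomp Require Import complex.
Set Implicit Arguments. Unset Strict Implicit. Unset Printing Implicit Defensive.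
Import Order.TTheory GRing.Theory Num.Theory.
Import numFieldNormedType.Exports.
Local Open Scope ring_scope.

Section BJ.
Variables (K : numFieldType) (X : normedModType K).

Definition bj_orth (x y : X) : Prop := forall l : K, `|x| <= `|x + l *: y|.

Definition left_symmetric (x : X) : Prop :=
  forall y : X, bj_orth x y -> bj_orth y x.

Definition right_symmetric (x : X) : Prop :=
  forall y : X, bj_orth y x -> bj_orth x y.

Definition dual_elem (F : X -> K) : Prop :=
  (forall (a : K) (u v : X), F (a *: u + v) = a * F u + F v) /\ continuous F.

(* ||F|| = sup_{||y|| <= 1} |F y| = 1, written out *)
Definition norm_one (F : X -> K) : Prop :=
  (forall y : X, `|y| <= 1 -> `|F y| <= 1) /\
  (forall e : K, 0 < e -> exists y : X, `|y| <= 1 /\ 1 - e < `|F y|).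

Definition supporting_functional (x : X) (F : X -> K) : Prop :=
  dual_elem F /\ norm_one F /\ F x = (`|x| : K).

Definition smooth (x : X) : Prop :=
  x <> 0 /\ exists F, supporting_functional x F /\
    forall G, supporting_functional x G -> G = F.

End BJ.

(* Let F be the unique supporting functional of x and let x _|_ y.  By a
   Hahn-Banach argument (James), whenever x _|_ z some supporting functional
   of x vanishes at z; by smoothness that functional is F, so F y = 0.  The
   scalar field is locally compact, so some a minimises |y + a x|, i.e.
   y + a x _|_ x.  Right symmetry gives x _|_ y + a x, hence
   0 = F (y + a x) = a |x|, so a = 0 and y _|_ x. *)

From HB Require Import structures.
From mathcomp Require Import all_boot all_order all_algebra.
From mathcomp Require Import all_classical all_reals all_analysis.
From mathcomp Require Import complex.
From mathcomp Require Import ring.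
Set Implicit Arguments. Unset Strict Implicit. Unset Printing Implicit Defensive.
Import Order.TTheory GRing.Theory Num.Theory.
Import numFieldNormedType.Exports.
Local Open Scope ring_scope.
Local Open Scope classical_set_scope.

Definition linear_functional (K : pzRingType) (V : lmodType K) (f : V -> K) :=
  forall (a : K) (u v : V), f (a *: u + v) = a * f u + f v.

Section LinearFunctional.
Variables (K : pzRingType) (V : lmodType K) (f : V -> K).
Hypothesis f_lin : linear_functional f.

Lemma linear_functional0 : f 0 = 0.
Proof.
have := f_lin 1 0 0; rewrite scale1r addr0 mul1r => f00.
by apply: (@addrI _ (f 0)); rewrite addr0 -f00.
Qed.

Lemma linear_functionalD u v : f (u + v) = f u + f v.
Proof. by rewrite -[u in LHS]scale1r f_lin mul1r. Qed.

Lemma linear_functionalZ a u : f (a *: u) = a * f u.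
Proof. by rewrite -[_ *: u]addr0 f_lin linear_functional0 addr0. Qed.

Lemma linear_functionalB u v : f (u - v) = f u - f v.
Proof. by rewrite linear_functionalD -scaleN1r linear_functionalZ mulN1r. Qed.

End LinearFunctional.

Section HahnBanach.
Variables (R : realType) (V : lmodType R) (p : V -> R).
Hypothesis pD : forall u v, p (u + v) <= p u + p v.
Hypothesis pZ : forall (r : R) v, p (r *: v) = `|r| * p v.

Let p0 : p 0 = 0.
Proof. by have := pZ 0 0; rewrite scale0r normr0 mul0r. Qed.

Let pN v : p (- v) = p v.
Proof. by rewrite -scaleN1r pZ normrN normr1 mul1r. Qed.

(* A partial linear functional below p, encoded by its graph. *)
Definition dominated_graph (G : set (V * R)) := [/\ G (0, 0),
  (forall v t w s, G (v, t) -> G (w, s) -> G (v + w, t + s)),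
  (forall r v t, G (v, t) -> G (r *: v, r * t)) &
  (forall v t, G (v, t) -> t <= p v)].

Lemma dominated_graph_fun G v t t' :
  dominated_graph G -> G (v, t) -> G (v, t') -> t = t'.
Proof.
case=> _ Gadd Gsc Gp.
suff le_graph s s' : G (v, s) -> G (v, s') -> s <= s'.
  by move=> Gt Gt'; apply/eqP; rewrite eq_le !le_graph.
move=> Gs Gs'; have := Gp _ _ (Gadd _ _ _ _ Gs (Gsc (-1) _ _ Gs')).
by rewrite scaleN1r subrr p0 mulN1r subr_le0.
Qed.

Lemma dominated_graph_gap G u : dominated_graph G -> exists c,
  (forall v t, G (v, t) -> t - p (v - u) <= c) /\
  (forall w s, G (w, s) -> c <= p (w + u) - s).
Proof.
case=> G0 Gadd _ Gp.
have gap v t w s : G (v, t) -> G (w, s) -> t - p (v - u) <= p (w + u) - s.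
  move=> Gvt Gws; rewrite lerBrDr addrAC lerBlDr.
  apply: le_trans (Gp _ _ (Gadd _ _ _ _ Gvt Gws)) _.
  have -> : v + w = (w + u) + (v - u) by rewrite addrACA subrr addr0 addrC.
  exact: pD.
pose S := [set q.2 - p (q.1 - u) | q in G].
have S_ub w s : G (w, s) -> ubound S (p (w + u) - s).
  by move=> Gws _ [[v t] Gvt <-]; exact: gap Gvt Gws.
have S0 : S !=set0 by exists (0 - p (0 - u)), (0, 0).
exists (sup S); split => [v t Gvt|w s Gws]; last exact: ge_sup (S_ub _ _ Gws).
apply: sup_upper_bound; last by exists (v, t).
by split => //; exists (p (0 + u) - 0); exact: S_ub.
Qed.

Lemma dominated_graph_extend G u : dominated_graph G -> ~ (exists t, G (u, t)) ->
  exists2 G', dominated_graph G' & G `<` G'.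
Proof.
move=> domG Gu; have [G0 Gadd Gsc Gp] := domG.
have [c [c_lb c_ub]] := dominated_graph_gap u domG.
pose G' q := exists v t s, G (v, t) /\ q = (v + s *: u, t + s * c).
have G'p v t s : G (v, t) -> t + s * c <= p (v + s *: u).
  move=> Gvt; have [->|s_neq0] := eqVneq s 0.
    by rewrite mul0r scale0r !addr0; exact: Gp.
  have -> : v + s *: u = s *: (s^-1 *: v + u).
    by rewrite scalerDr scalerA mulfV // scale1r.
  have -> : t + s * c = s * (s^-1 * t + c) by rewrite mulrDr mulrA mulfV // mul1r.
  rewrite pZ; have [s_gt0|s_le0] := ltrP 0 s.
    rewrite gtr0_norm // ler_pM2l //; move: (c_ub _ _ (Gsc s^-1 _ _ Gvt)).
    by rewrite lerBrDr addrC.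
  have s_lt0 : s < 0 by rewrite lt_neqAle s_neq0.
  rewrite ltr0_norm // mulNr -mulrN ler_nM2l //.
  move: (c_lb _ _ (Gsc (- s^-1) _ _ Gvt)).
  by rewrite scaleNr mulNr -[- _ - u]opprD pN -lerBlDl addrC.
exists G'; last split.
- split.
  + by exists 0, 0, 0; rewrite scale0r mul0r !addr0.
  + move=> _ _ _ _ [v [t [s [Gvt [-> ->]]]]] [v' [t' [s' [Gvt' [-> ->]]]]].
    exists (v + v'), (t + t'), (s + s'); split; first exact: Gadd.
    by rewrite scalerDl mulrDl; congr (_, _); exact: addrACA.
  + move=> r _ _ [v [t [s [Gvt [-> ->]]]]].
    exists (r *: v), (r * t), (r * s); split; first exact: Gsc.
    by rewrite scalerDr scalerA mulrDr mulrA.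
  + by move=> _ _ [v [t [s [Gvt [-> ->]]]]]; exact: G'p.
- by move=> [v t] Gvt; exists v, t, 0; rewrite scale0r mul0r !addr0.
- move=> G'G; apply: Gu; exists c; apply: G'G.
  by exists 0, 0, 1; rewrite scale1r mul1r !add0r.
Qed.

Lemma dominated_graph_bigcup (F : set (set (V * R))) : F !=set0 ->
  F `<=` dominated_graph -> total_on F subset ->
  dominated_graph (\bigcup_(G in F) G).
Proof.
move=> [G0 FG0] domF totF; split.
- by exists G0 => //; case: (domF _ FG0).
- move=> v t w s [G1 FG1 G1vt] [G2 FG2 G2ws].
  have [G12|G21] := totF _ _ FG1 FG2.
    by exists G2 => //; case: (domF _ FG2) => _ Gadd _ _; apply: Gadd => //; exact: G12.
  by exists G1 => //; case: (domF _ FG1) => _ Gadd _ _; apply: Gadd => //; exact: G21.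
- move=> r v t [G1 FG1 Gvt]; exists G1 => //.
  by case: (domF _ FG1) => _ _ Gsc _; exact: Gsc.
- by move=> v t [G1 FG1 Gvt]; case: (domF _ FG1) => _ _ _; apply.
Qed.

Lemma hahn_banach_graph G0 : dominated_graph G0 -> exists g : V -> R,
  [/\ linear_functional g, forall v, g v <= p v & forall v t, G0 (v, t) -> g v = t].
Proof.
move=> domG0; have [G00 _ _ _] := domG0.
(* [set0] is admitted since it is the union of the empty chain. *)
pose P G := G = set0 \/ dominated_graph G /\ G0 `<=` G.
have [G [PG Gmax]] : exists G, P G /\ forall G', G `<` G' -> ~ P G'.
  apply: Zorn_bigcup => F FP totF.
  pose F' := [set G | F G /\ dominated_graph G].
  have FF' : \bigcup_(G in F) G = \bigcup_(G in F') G.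
    apply/seteqP; split=> q [G FG Gq]; exists G => //; last by case: FG.
    split => //; by case: (FP _ FG) => [G_0|[]//]; rewrite G_0 in Gq.
  have [[G1 [FG1 domG1]]|F'_0] := pselect (F' !=set0); last first.
    left; rewrite FF'; apply/seteqP; split=> // q [G F'G _].
    by apply: F'_0; exists G.
  have [G1_0|[_ G0G1]] := FP _ FG1; first by case: domG1; rewrite G1_0.
  right; split; last by move=> q /G0G1 G1q; exists G1.
  rewrite FF'; apply: dominated_graph_bigcup => [|G []//|G G' [FG _] [FG' _]].
    by exists G1.
  exact: totF.
have [G_0|[domG G0G]] := PG.
  exfalso; apply: (Gmax G0); last by right; split.
  by rewrite G_0; split => [|/(_ _ G00)//]; exact: sub0set.
have G_total u : exists t, G (u, t).
  apply: contrapT => Gu; have [G' domG' GG'] := dominated_graph_extend domG Gu.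
  by apply: (Gmax G' GG'); right; split => // q /G0G /(properW GG').
have [g Gg] : exists g : V -> R, forall u, G (u, g u).
  by exists (fun u => sval (cid (G_total u))) => u; exact: svalP (cid (G_total u)).
have [_ Gadd Gsc Gp] := domG.
exists g; split => [r u v|v|v t /G0G Gvt]; last exact: dominated_graph_fun domG (Gg v) Gvt.
- exact: dominated_graph_fun domG (Gg _) (Gadd _ _ _ _ (Gsc r _ _ (Gg u)) (Gg v)).
- exact: Gp.
Qed.

Lemma hahn_banach_annihilator (W : set V) x c : W 0 ->
  (forall r w w', W w -> W w' -> W (r *: w + w')) ->
  (forall a w, W w -> a * c <= p (a *: x + w)) ->
  exists g : V -> R, [/\ linear_functional g, forall v, g v <= p v, g x = c &
    forall w, W w -> g w = 0].
Proof.
move=> W0 Wlin dom.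
pose G0 q := exists a w, W w /\ q = (a *: x + w, a * c).
have domG0 : dominated_graph G0.
  split.
  - by exists 0, 0; rewrite scale0r mul0r addr0.
  - move=> _ _ _ _ [a [w [Ww [-> ->]]]] [a' [w' [Ww' [-> ->]]]].
    exists (a + a'), (w + w'); split; first by rewrite -[w]scale1r; exact: Wlin.
    by rewrite scalerDl mulrDl; congr (_, _); exact: addrACA.
  - move=> r _ _ [a [w [Ww [-> ->]]]]; exists (r * a), (r *: w).
    split; first by rewrite -[_ *: w]addr0; exact: Wlin.
    by rewrite scalerDr scalerA mulrA.
  - by move=> _ _ [a [w [Ww [-> ->]]]]; exact: dom.
have [g [g_lin g_p gG0]] := hahn_banach_graph domG0.
exists g; split => // [|w Ww]; apply: gG0.
- by exists 1, 0; rewrite scale1r mul1r addr0.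
- by exists 0, w; rewrite scale0r mul0r add0r.
Qed.

End HahnBanach.

Lemma lipschitz_continuous (K : numFieldType) (V : normedModType K) (f : V -> K) k :
  0 < k -> (forall u v, `|f u - f v| <= k * `|u - v|) -> continuous f.
Proof.
move=> k_gt0 f_lip x; apply/cvgrPdist_lt => e e_gt0; near=> y.
apply: le_lt_trans (f_lip x y) _; rewrite -ltr_pdivlMl //; near: y.
by apply: cvgr_dist_lt; [exact: cvg_id | rewrite mulr_gt0 ?invr_gt0].
Unshelve. all: by end_near.
Qed.

Section BirkhoffJames.
Variables (K : numFieldType) (X : normedModType K).

Lemma supporting_functional_of_le_norm (x : X) (F : X -> K) : x != 0 ->
  linear_functional F -> (forall u, `|F u| <= `|u|) -> F x = `|x| ->
  supporting_functional x F.
Proof.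
move=> x_neq0 F_lin F_le Fx; split; [split => //|split => //].
  apply: (@lipschitz_continuous _ _ _ 1) => // u v.
  by rewrite mul1r -(linear_functionalB F_lin).
split=> [y y_le1|e e_gt0]; first exact: le_trans (F_le y) y_le1.
have nx_neq0 : `|x| != 0 by rewrite normr_eq0.
exists (`|x|^-1 *: x); rewrite (linear_functionalZ F_lin) Fx mulVf // normr1.
by rewrite normrZ normfV normr_id mulVf // ltrBlDr ltrDl.
Qed.

Lemma bj_orth_normZ (x z : X) a b : bj_orth x z -> `|a| * `|x| <= `|a *: x + b *: z|.
Proof.
move=> xz; have [->|a_neq0] := eqVneq a 0; first by rewrite normr0 mul0r.
have -> : a *: x + b *: z = a *: (x + (b / a) *: z).
  by rewrite scalerDr scalerA mulrCA mulfV // mulr1.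
by rewrite normrZ ler_wpM2l.
Qed.

Lemma ler_norm_shift_dist (x y : X) a b :
  `|(`|y + a *: x| - `|y + b *: x|)| <= `|a - b| * `|x|.
Proof.
apply: le_trans (ler_dist_dist _ _) _.
by rewrite opprD addrACA subrr add0r -scalerBl normrZ.
Qed.

(* Outside the ball, |y + b x| >= |b| |x| - |y| > |y| >= |y + a x|. *)
Lemma bj_orth_of_min_ball (x y : X) a : x != 0 ->
  (forall b, `|b| <= 2 * `|y| / `|x| -> `|y + a *: x| <= `|y + b *: x|) ->
  bj_orth (y + a *: x) x.
Proof.
move=> x_neq0 a_min l; rewrite -addrA -scalerDl.
have nx_gt0 : 0 < `|x| by rewrite normr_gt0.
have M_real : 2 * `|y| / `|x| \is Num.real.
  by rewrite ger0_real // divr_ge0 // mulr_ge0.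
have [|M_lt] := real_leP (normr_real (a + l)) M_real; first exact: a_min.
have a_le : `|y + a *: x| <= `|y|.
  by have := a_min 0; rewrite scale0r addr0 normr0; apply; rewrite divr_ge0 // mulr_ge0.
apply: le_trans a_le (ltW _); rewrite -(ltrD2r `|y|).
apply: lt_le_trans (ler_normB (y + (a + l) *: x) y).
rewrite addrAC subrr add0r normrZ -ltr_pdivrMr // -mulr2n -mulr_natl.
by move: M_lt; rewrite mulrC.
Qed.

Lemma left_symmetric_of_smooth_right_symmetric (x : X) :
  (forall z, bj_orth x z -> exists2 G, supporting_functional x G & G z = 0) ->
  (forall y, exists a, bj_orth (y + a *: x) x) ->
  right_symmetric x -> smooth x -> left_symmetric x.
Proof.
move=> vanishing shift rs [x_neq0 [F [sF F_unique]]] y xy.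
have [[F_lin _] [_ Fx]] := sF.
have Fy : F y = 0 by have [G sG Gy] := vanishing _ xy; rewrite -(F_unique _ sG).
have [a yax] := shift y.
have [G sG Gyax] := vanishing _ (rs _ yax); rewrite (F_unique _ sG) in Gyax.
have /eqP : a * `|x| = 0.
  by rewrite -Fx -(linear_functionalZ F_lin) -Gyax (linear_functionalD F_lin) Fy add0r.
rewrite mulf_eq0 normr_eq0 => /orP[/eqP a0|/eqP //].
by move: yax; rewrite a0 scale0r addr0.
Qed.

End BirkhoffJames.

Section RealScalars.
Variables (R : realType) (X : normedModType R).

Lemma exists_supporting_functional_vanishing_real (x z : X) : x != 0 ->
  bj_orth x z -> exists2 G, supporting_functional x G & G z = 0.
Proof.
move=> x_neq0 xz.
have [|||g [g_lin g_le gx gz]] := @hahn_banach_annihilator R X (fun v => `|v|)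
    (@ler_normD _ _) (@normrZ _ _) (range (fun b : R => b *: z)) x `|x|.
- by exists 0 => //; rewrite scale0r.
- by move=> r _ _ [b _ <-] [b' _ <-]; exists (r * b + b') => //; rewrite scalerDl scalerA.
- move=> a _ [b _ <-]; apply: le_trans (bj_orth_normZ a b xz).
  by rewrite ler_wpM2r // ler_norm.
exists g; last by apply: gz; exists 1 => //; rewrite scale1r.
apply: supporting_functional_of_le_norm => // u.
rewrite ler_norml g_le andbT lerNl -mulN1r -(linear_functionalZ g_lin).
by rewrite (le_trans (g_le _)) // normrZ normrN1 mul1r.
Qed.

Lemma exists_bj_orth_shift_real (x y : X) : x != 0 -> exists a : R, bj_orth (y + a *: x) x.
Proof.
move=> x_neq0; pose M := 2 * `|y| / `|x|.
have M_ge0 : 0 <= M by rewrite divr_ge0 // mulr_ge0.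
pose f a := `|y + a *: x|.
have f_cont : continuous f.
  apply: (@lipschitz_continuous _ _ _ `|x|) => [|u v]; first by rewrite normr_gt0.
  by rewrite mulrC; exact: ler_norm_shift_dist.
have [a _ a_min] := @EVT_min R f (- M) M (ge0_cp M_ge0).2 (continuous_subspaceT f_cont).
exists a; apply: bj_orth_of_min_ball => // b b_le.
by apply: a_min; rewrite in_itv /= -ler_norml.
Qed.

End RealScalars.

Local Open Scope complex_scope.
Local Notation Re := complex.Re.
Local Notation Im := complex.Im.

Section ComplexNumbers.
Variable R : realType.
Local Notation C := R[i].

Lemma normRe (V : normedZmodType C) (v : V) : `|v| = (Re `|v|)%:C.
Proof. by rewrite RRe_real // ger0_real. Qed.

Lemma normc_real (r : R) : `|r%:C| = `|r|%:C :> C.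
Proof. by rewrite normc_def /= expr0n /= addr0 sqrtr_sqr. Qed.

Lemma normc_i : `|'i : C| = 1.
Proof. by rewrite normc_def /= expr0n /= add0r expr1n sqrtr1. Qed.

Lemma Re_le_normc (w : C) : `|Re w| <= Re `|w|.
Proof. by rewrite -lecR -(normRe w) normc_ge_Re. Qed.

Lemma Im_le_normc (w : C) : `|Im w| <= Re `|w|.
Proof. by have := Re_le_normc (w * 'i); rewrite ReiNIm normrN normrM normc_i mulr1. Qed.

Lemma normc_le_ReIm (a b : R) : `|a +i* b| <= (`|a| + `|b|)%:C.
Proof.
rewrite [a +i* b]complexE /= (le_trans (ler_normD _ _)) //.
by rewrite normrM normc_i mul1r !normc_real rmorphD.
Qed.

Lemma le_normc (r : R) (w : C) : Re w = r -> r%:C <= `|w|.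
Proof. by move=> <-; apply: le_trans (normc_ge_Re w); rewrite lecR ler_norm. Qed.

End ComplexNumbers.

Section Realification.
Variables (R : realType) (X : normedModType R[i]).

Definition realified : Type := X.
HB.instance Definition _ := GRing.Zmodule.on realified.

Definition realified_scale (r : R) (v : realified) : realified := r%:C *: (v : X).

Fact realified_scaleA a b v :
  realified_scale a (realified_scale b v) = realified_scale (a * b) v.
Proof. by rewrite /realified_scale scalerA rmorphM. Qed.

Fact realified_scale1 : left_id 1 realified_scale.
Proof. by move=> v; rewrite /realified_scale scale1r. Qed.

Fact realified_scaleDr : right_distributive realified_scale +%R.
Proof. by move=> a u v; rewrite /realified_scale scalerDr. Qed.

Fact realified_scaleDl v : {morph realified_scale^~ v : a b / a + b}.
Proof. by move=> a b; rewrite /realified_scale rmorphD scalerDl. Qed.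

HB.instance Definition _ := GRing.Zmodule_isLmodule.Build R realified
  realified_scaleA realified_scale1 realified_scaleDr realified_scaleDl.

Definition complexify (g : realified -> R) (u : X) : R[i] :=
  (g u)%:C - 'i * (g ('i *: u))%:C.

Variable g : realified -> R.
Hypothesis g_lin : linear_functional g.

Lemma Re_complexify u : Re (complexify g u) = g u.
Proof. by rewrite /complexify -!complexr0; simpc. Qed.

Lemma complexify_linear : linear_functional (complexify g).
Proof.
have gD (u v : X) : g (u + v) = g u + g v := linear_functionalD g_lin u v.
have gZ (r : R) (u : X) : g (r%:C *: u) = r * g u := linear_functionalZ g_lin r u.
have gN (u : X) : g (- u) = - g u by rewrite -scaleN1r -(rmorphN1 (real_complex R)) gZ mulN1r.
have ii : 'i * 'i = -1 :> R[i] by rewrite -expr2 sqr_i.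
have GD u v : complexify g (u + v) = complexify g u + complexify g v.
  by rewrite /complexify scalerDr !gD !rmorphD; ring.
have GZ (r : R) u : complexify g (r%:C *: u) = r%:C * complexify g u.
  have iZ : 'i *: (r%:C *: u) = r%:C *: ('i *: u) by rewrite !scalerA mulrC.
  by rewrite /complexify iZ !gZ !rmorphM; ring.
have Gi u : complexify g ('i *: u) = 'i * complexify g u.
  by rewrite /complexify scalerA ii scaleN1r gN rmorphN mulrBr mulrA ii; ring.
move=> l u v; rewrite GD; congr (_ + _).
by rewrite [in LHS](complexE l) scalerDl -scalerA GD GZ Gi GZ mulrA -mulrDl -complexE.
Qed.

Lemma complexify_le_norm : (forall v : realified, g v <= Re `|v : X|) ->
  forall u, `|complexify g u| <= `|u|.
Proof.
move=> g_le u.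
have [->|Gu_neq0] := eqVneq (complexify g u) 0; first by rewrite normr0.
pose w := `|complexify g u| / complexify g u.
have w_norm : `|w| = 1 by rewrite normf_div normr_id divff // normr_eq0.
have Gwu : complexify g (w *: u) = `|complexify g u|.
  by rewrite (linear_functionalZ complexify_linear) divfK.
rewrite normRe [`|u|]normRe lecR -Gwu Re_complexify.
by apply: le_trans (g_le _) _; rewrite normrZ w_norm mul1r.
Qed.

End Realification.

Section ComplexScalars.
Variables (R : realType) (X : normedModType R[i]).

Lemma exists_supporting_functional_vanishing_complex (x z : X) : x != 0 ->
  bj_orth x z -> exists2 G, supporting_functional x G & G z = 0.
Proof.
move=> x_neq0 xz.
pose p (v : realified X) := Re `|v : X|.
have pD (u v : realified X) : p (u + v) <= p u + p v.
  have := ler_normD (u : X) v.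
  by rewrite [`|_ + _|]normRe [`|u : X|]normRe [`|v : X|]normRe -rmorphD lecR.
have pZ (r : R) (v : realified X) : p (r *: v) = `|r| * p v.
  by rewrite /p; change (Re `|r%:C *: (v : X)| = `|r| * Re `|v : X|);
    rewrite normrZ normc_real [`|v : X|]normRe -rmorphM.
(* [i x] lies in [W] so that [g (i x) = 0], whence [complexify g x = |x|]. *)
pose W (w : realified X) := exists (b : R[i]) (d : R), w = b *: z + (d%:C * 'i) *: x.
have [|||g [g_lin g_le gx gW]] := hahn_banach_annihilator pD pZ (x := x) (c := p x) (W := W).
- by exists 0, 0; rewrite rmorph0 mul0r !scale0r addr0.
- move=> r _ _ [b [d ->]] [b' [d' ->]]; exists (r%:C * b + b'), (r * d + d').
  change (r%:C *: (b *: z + (d%:C * 'i) *: x) + (b' *: z + (d'%:C * 'i) *: x) =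
    (r%:C * b + b') *: z + ((r * d + d')%:C * 'i) *: x).
  by rewrite scalerDr !scalerA addrACA -!scalerDl rmorphD rmorphM mulrDl mulrA.
- move=> a _ [b [d ->]]; rewrite /p.
  change (a * Re `|x| <= Re `|a%:C *: x + (b *: z + (d%:C * 'i) *: x)|).
  rewrite addrCA -scalerDl addrC.
  have : a%:C * `|x| <= `|(a%:C + d%:C * 'i) *: x + b *: z|.
    apply: le_trans (bj_orth_normZ _ b xz); rewrite ler_wpM2r //.
    by apply: le_normc; rewrite -!complexr0; simpc.
  by rewrite [`|x|]normRe [`|_ + _|]normRe -rmorphM lecR.
exists (complexify g).
  apply: supporting_functional_of_le_norm => //; first exact: complexify_linear.
    exact: complexify_le_norm.
  rewrite /complexify gx (gW ('i *: x)) ?mulr0 ?subr0 -?normRe //.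
  by exists 0, 1; rewrite scale0r add0r mul1r.
rewrite /complexify (gW z) ?(gW ('i *: z)) ?mulr0 ?subr0 //.
- by exists 'i, 0; rewrite mul0r scale0r addr0.
- by exists 1, 0; rewrite mul0r scale0r addr0 scale1r.
Qed.

Lemma continuous_norm_shift_pair (x y : X) : x != 0 ->
  continuous (fun q : R * R => Re `|y + (q.1 +i* q.2) *: x|).
Proof.
move=> x_neq0; have nx_gt0 : 0 < Re `|x|.
  by move: x_neq0; rewrite -normr_gt0 (normRe x) ltcE => /andP[].
apply: (@lipschitz_continuous _ _ _ (2 * Re `|x|)) => [|q q']; first by rewrite mulr_gt0.
have dist_le : `|(q.1 +i* q.2) - (q'.1 +i* q'.2)| <= (2 * `|q - q'|)%:C.
  apply: le_trans (normc_le_ReIm (q.1 - q'.1) (q.2 - q'.2)) _.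
  by rewrite lecR mulr_natl mulr2n lerD // prod_normE le_max lexx ?orbT.
have := le_trans (ler_norm_shift_dist x y _ _) (ler_wpM2r (normr_ge0 x) dist_le).
rewrite [`|y + (q.1 +i* q.2) *: x|]normRe [`|y + (q'.1 +i* q'.2) *: x|]normRe.
by rewrite [`|x|]normRe -rmorphB normc_real -rmorphM lecR mulrAC.
Qed.

Lemma exists_bj_orth_shift_complex (x y : X) : x != 0 ->
  exists a : R[i], bj_orth (y + a *: x) x.
Proof.
move=> x_neq0; pose M := 2 * Re `|y| / Re `|x|.
have M_ge0 : 0 <= M by rewrite divr_ge0 ?mulr_ge0 // -ler0c -normRe.
(* Closed discs of C are handled through the compact square [-M, M]^2 of R * R. *)
have square_compact := compact_setX (@segment_compact R (- M) M) (@segment_compact R (- M) M).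
have square0 : (`[- M, M] `*` `[- M, M]) (0, 0) by rewrite /= in_itv /= oppr_le0 M_ge0.
have [c _ c_min] := compact_EVT_min (ex_intro _ _ square0) square_compact
  (continuous_subspaceT (continuous_norm_shift_pair (y := y) x_neq0)).
exists (c.1 +i* c.2); apply: bj_orth_of_min_ball => // b.
have -> : 2 * `|y| / `|x| = M%:C.
  by rewrite [`|y|]normRe [`|x|]normRe /M !rmorphM fmorphV rmorph_nat.
rewrite [`|b|]normRe lecR => b_le.
rewrite [`|y + _ *: x|]normRe [`|y + b *: x|]normRe lecR.
case: b b_le => a d ad_le; apply: (c_min (a, d)); rewrite inE; split; rewrite /= in_itv /=.
  by rewrite -ler_norml (le_trans (Re_le_normc (a +i* d))).
by rewrite -ler_norml (le_trans (Im_le_normc (a +i* d))).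
Qed.

End ComplexScalars.

Theorem lemma3p16 :
  (forall (R : realType) (X : completeNormedModType R) (x : X),
      x <> 0 -> right_symmetric x -> smooth x -> left_symmetric x) /\
  (forall (R : realType) (X : completeNormedModType R[i]) (x : X),
      x <> 0 -> right_symmetric x -> smooth x -> left_symmetric x).
Proof.
split=> R X x /eqP x_neq0; apply: left_symmetric_of_smooth_right_symmetric => [z|y].
- exact: exists_supporting_functional_vanishing_real.
- exact: exists_bj_orth_shift_real.
- exact: exists_supporting_functional_vanishing_complex.
- exact: exists_bj_orth_shift_complex.
Qed.
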